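(* For any signature $\Sigma$ and any reduced $\Sigma$-forest $f$, the coproduct of $\mathbf N(T(\Sigma))$ satisfies $$\Delta E_f=\sum_{I_1,I_2\subseteq[\deg f]}[(I_1,I_2)\text{ is } f\text{-admissible}]\;E_{f(I_1)}\otimes E_{f(I_2)}.$$
   Context: $\mathbb K$ is a field of characteristic zero, $\mathbb N=\{0,1,2,\dots\}$, $[n]=\{1,\dots,n\}$, and $[P]$ is $1$ if $P$ holds and $0$ otherwise. A signature is a set $\Sigma$ with an arity map $|\cdot|:\Sigma\to\mathbb N$; $\Sigma(n)$ is the set of elements of arity $n$. A $\Sigma$-term is either the leaf $\bot$ or $s(t_1,\dots,t_n)$ with $s\in\Sigma(n)$ and $\Sigma$-terms $t_i$ (a planar rooted tree with internal nodes with $n$ children decorated by $\Sigma(n)$); its degree is its number of internal nodes, its arity $|t|$ its number of leaves. $T(\Sigma)$ is the free nonsymmetric operad on $\Sigma$: $t[t_1,\dots,t_{|t|}]$ grafts the root of $t_i$ onto the $i$-th leaf of $t$ (leaves numbered left to right), unit $\bot$. A $\Sigma$-forest is a finite word of terms, of degree the sum of the degrees; it is reduced if no term is $\bot$; $\mathrm{rd}(w)$ deletes the terms equal to $\bot$ from a word $w$ of terms. The internal nodes of a forest $f$ are identified with $1,\dots,\deg f$ by the left-to-right preorder traversal (terms taken from left to right). For a reduced forest $f$ and $I\subseteq[\deg f]$, the restriction $f(I)$ is the reduced forest obtained by keeping only the internal nodes of $f$ that are in $I$ (with their decorations and arities) and the edges between them: every child position of a kept node which is occupied in $f$ by a leaf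 or by a node not in $I$ becomes a leaf, each kept node whose parent is not kept (or which is a root) becomes the root of a new term, and the resulting terms are ordered by the preorder rank in $f$ of their roots. In particular $f(\emptyset)=\epsilon$. A pair $(I_1,I_2)$ is $f$-admissible if $I_1\sqcup I_2=[\deg f]$, every ancestor of a node in $I_1$ is in $I_1$, and every descendant of a node in $I_2$ is in $I_2$. $\mathbf N(T(\Sigma))$ is the $\mathbb K$-vector space with basis $E_f$, $f$ reduced $\Sigma$-forest, with product $E_{f_1}E_{f_2}=E_{f_1f_2}$ and coproduct the unique algebra morphism with $\Delta E_t=\sum E_{\mathrm{rd}(t')}\otimes E_{\mathrm{rd}(t_1\cdots t_{|t'|})}$ for terms $t\ne\bot$, summed over all $t',t_1,\dots,t_{|t'|}\in T(\Sigma)$ with $t=t'[t_1,\dots,t_{|t'|}]$ (with $E_{\mathrm{rd}(\bot)}=E_\epsilon$). *)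

From HB Require Import structures.
From mathcomp Require Import all_boot all_order all_algebra.
From mathcomp Require Import boolp classical_sets fsbigop.

Set Implicit Arguments.
Unset Strict Implicit.
Unset Printing Implicit Defensive.
Import GRing.Theory.

Local Open Scope ring_scope.

(* A signature is a type S together with an arity map ar : S -> nat.        *)
(* Sigma-terms: planar rooted trees; [Leaf] is the leaf "bot", and          *)
(* [Node s ts] is s(t_1,...,t_n).  The arity constraint |ts| = ar s is      *)
(* imposed by the predicate [wf ar].                                         *)

Inductive term (S : Type) : Type :=
| Leaf : term S
| Node : S -> seq (term S) -> term S.
Arguments Leaf {S}.

HB.instance Definition _ (S : Type) := gen_eqMixin (term S).
HB.instance Definition _ (S : Type) := gen_choiceMixin (term S).

Definition forest (S : Type) := seq (term S).

Section Terms.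
Variables (S : Type) (ar : S -> nat).

Definition isLeaf (t : term S) : bool := if t is Leaf then true else false.

Fixpoint wf (t : term S) : bool :=
  match t with
  | Leaf => true
  | Node s ts => (size ts == ar s) && all wf ts
  end.

Fixpoint deg (t : term S) : nat :=
  match t with
  | Leaf => 0
  | Node _ ts => (sumn (map deg ts)).+1
  end.

Definition degf (f : forest S) : nat := sumn (map deg f).

Fixpoint nleaves (t : term S) : nat :=
  match t with
  | Leaf => 1
  | Node _ ts => sumn (map nleaves ts)
  end.

Definition reduced (f : forest S) : bool := all (fun t => ~~ isLeaf t && wf t) f.

Definition rd (f : forest S) : forest S := [seq t <- f | ~~ isLeaf t].

(* Grafting t[t_1,...,t_k]: the i-th leaf of t (left to right) is replaced by
   t_i.  [graft_go t us] consumes the needed prefix of us and returns the rest. *)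
Fixpoint graft_go (t : term S) (us : seq (term S)) : term S * seq (term S) :=
  match t with
  | Leaf => match us with [::] => (Leaf, [::]) | u :: us' => (u, us') end
  | Node s ts =>
    let fix gos (ts : seq (term S)) (us : seq (term S)) :=
        match ts with
        | [::] => ([::], us)
        | t1 :: ts' =>
          let r1 := graft_go t1 us in
          let r2 := gos ts' r1.2 in
          (r1.1 :: r2.1, r2.2)
        end in
    let r := gos ts us in (Node s r.1, r.2)
  end.

(* t[t_1, ..., t_{|t|}] (used only when size us = nleaves t) *)
Definition graft (t : term S) (us : seq (term S)) : term S := (graft_go t us).1.

(* Preorder numbering of internal nodes (0-based: node k here is node k+1  *)
(* of the paper), ancestors, restriction and admissibility.                 *)

(* For the term t whose root has preorder index n and whose proper ancestors
   are A, list (in preorder) for every internal node the list of its proper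
   ancestors. *)
Fixpoint anc_go (A : seq nat) (n : nat) (t : term S) : seq (seq nat) :=
  match t with
  | Leaf => [::]
  | Node _ ts =>
    let fix gos (m : nat) (ts : seq (term S)) :=
        match ts with
        | [::] => [::]
        | u :: ts' => anc_go (n :: A) m u ++ gos (m + deg u) ts'
        end in
    A :: gos n.+1 ts
  end.

Fixpoint ancs_from (m : nat) (f : forest S) : seq (seq nat) :=
  match f with
  | [::] => [::]
  | t :: f' => anc_go [::] m t ++ ancs_from (m + deg t) f'
  end.

Definition is_anc (f : forest S) (i j : nat) : bool :=
  i \in nth [::] (ancs_from 0 f) j.

(* Restriction.  [restr_go P n t], for the term t whose root has preorder
   index n, returns (c, F) where c is the part of the restriction attached to
   the parent of the root of t (bot if the root is not kept), and F is the list
   (in preorder of roots) of the new terms whose roots lie strictly below. *)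
Fixpoint restr_go (P : pred nat) (n : nat) (t : term S) : term S * forest S :=
  match t with
  | Leaf => (Leaf, [::])
  | Node s ts =>
    let fix gos (m : nat) (ts : seq (term S)) :=
        match ts with
        | [::] => [::]
        | u :: ts' => restr_go P m u :: gos (m + deg u) ts'
        end in
    let rs := gos n.+1 ts in
    if P n then (Node s (map fst rs), flatten (map snd rs))
    else (Leaf, flatten [seq rd [:: r.1] ++ r.2 | r <- rs])
  end.

Fixpoint restr_from (P : pred nat) (m : nat) (f : forest S) : forest S :=
  match f with
  | [::] => [::]
  | t :: f' =>
    let r := restr_go P m t in rd [:: r.1] ++ r.2 ++ restr_from P (m + deg t) f'
  end.

Definition in_set_nat (d : nat) (I : {set 'I_d}) (k : nat) : bool :=
  if (insub k : option 'I_d) is Some i then i \in I else false.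

Definition restr (f : forest S) (I : {set 'I_(degf f)}) : forest S :=
  restr_from (in_set_nat I) 0 f.

Definition admissible (f : forest S) (I1 I2 : {set 'I_(degf f)}) : bool :=
  [&& [disjoint I1 & I2], [forall k : 'I_(degf f), (k \in I1) || (k \in I2)],
      [forall i : 'I_(degf f), forall j : 'I_(degf f),
          ((j \in I1) && is_anc f i j) ==> (i \in I1)] &
      [forall i : 'I_(degf f), forall j : 'I_(degf f),
          ((i \in I2) && is_anc f i j) ==> (j \in I2)]].

End Terms.

(* N(T(Sigma)) (+) N(T(Sigma)): an element is given by its coefficient     *)
(* function on the basis E_{g1} (x) E_{g2}, (g1, g2) pairs of forests.      *)

Section Coproduct.
Variables (K : fieldType) (S : Type) (ar : S -> nat).

Definition tensor := forest S -> forest S -> K.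

(* product in N (x) N : (E_a (x) E_b)(E_c (x) E_d) = E_{ac} (x) E_{bd} *)
Definition tmul (x y : tensor) : tensor := fun g1 g2 =>
  \sum_(i < (size g1).+1) \sum_(j < (size g2).+1)
     x (take i g1) (take j g2) * y (drop i g1) (drop j g2).

Definition tunit : tensor := fun g1 g2 => (nilp g1 && nilp g2)%:R.

Definition decomp (t : term S) : set (term S * seq (term S)) :=
  [set p | [/\ wf ar p.1, all (wf ar) p.2, size p.2 = nleaves p.1
             & graft p.1 p.2 = t]].

(* Delta E_t = sum E_{rd(t')} (x) E_{rd(t_1 ... t_{|t'|})} *)
Definition DeltaT (t : term S) : tensor := fun g1 g2 : forest S =>
  (\sum_(p \in decomp t) (((rd [:: p.1] == g1) && (rd p.2 == g2))%:R : K))%R.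

(* Delta extended as an algebra morphism: Delta E_{t1...tn} = prod Delta E_ti *)
Definition Delta (f : forest S) : tensor :=
  foldr (fun t acc => tmul (DeltaT t) acc) tunit f.

End Coproduct.

From HB Require Import structures.
From mathcomp Require Import all_boot all_order all_algebra.
From mathcomp Require Import boolp classical_sets fsbigop.
From mathcomp Require Import zify.
Import GRing.Theory.

Set Implicit Arguments.
Unset Strict Implicit.
Unset Printing Implicit Defensive.

(* A decomposition t = t'[t_1, ..., t_k] of a term is determined by the set
   of internal nodes of t lying in t'; these sets are exactly the sets of
   nodes closed under ancestors, and the decomposition is then the cut of t
   along that set, whose two sides are the restrictions of t to the set and
   to its complement.  Hence Delta E_t sums, over ancestor-closed sets I,
   E_{t(I)} (x) E_{t(complement I)}.  Since Delta is multiplicative and an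
   ancestor-closed set of nodes of a forest is a union of such sets for its
   terms, the same holds for forests; finally the f-admissible pairs are
   exactly the pairs (I, complement of I) with I ancestor-closed. *)

(** * Boolean sequences and sums over subsets *)

Fixpoint bitseqs n : seq (seq bool) :=
  if n is n'.+1 then [seq x :: b | x <- [:: true; false], b <- bitseqs n']
  else [:: [::]].

Lemma mem_map_cons (x y : bool) b (s : seq (seq bool)) :
  (y :: b \in map (cons x) s) = (x == y) && (b \in s).
Proof.
apply/mapP/andP => [[b' Hb' [-> ->]] | [/eqP -> Hb]]; first by rewrite eqxx.
by exists b.
Qed.

Lemma mem_bitseqs n b : (b \in bitseqs n) = (size b == n).
Proof.
elim: n b => [|n IH] [|x b] //=.
  by rewrite !mem_cat; apply/negP; case/or3P => // /mapP [? _].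
by rewrite !mem_cat !mem_map_cons IH; case: x; rewrite ?orbF.
Qed.

Lemma uniq_bitseqs n : uniq (bitseqs n).
Proof.
elim: n => //= n IH; rewrite cats0 cat_uniq !map_inj_uniq //; try by move=> ? ? [].
rewrite IH /= andbT; apply/hasPn => b /mapP [b' _ ->] /=.
by rewrite mem_map_cons.
Qed.

Definition set_of_bits d (b : seq bool) : {set 'I_d} := [set i : 'I_d | nth false b i].

Section BigBitseqs.
Variable R : nmodType.
Local Open Scope ring_scope.

Lemma big_bitseqs_cat m n (F : seq bool -> R) :
  \sum_(b <- bitseqs (m + n)) F b =
  \sum_(b1 <- bitseqs m) \sum_(b2 <- bitseqs n) F (b1 ++ b2).
Proof.
elim: m F => [|m IH] F; first by rewrite /= big_cons big_nil addr0.
rewrite addSn.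
rewrite (_ : bitseqs (m + n).+1 = [seq x :: b | x <- [:: true; false], b <- bitseqs (m + n)]) //.
rewrite (_ : bitseqs m.+1 = [seq x :: b | x <- [:: true; false], b <- bitseqs m]) //.
rewrite !big_allpairs_dep; apply: eq_bigr => x _.
exact: (IH (fun b => F (x :: b))).
Qed.

Lemma big_setE d (G : {set 'I_d} -> R) :
  \sum_(I : {set 'I_d}) G I = \sum_(b <- bitseqs d) G (set_of_bits d b).
Proof.
rewrite -(big_map (set_of_bits d) xpredT G); apply: perm_big.
apply: uniq_perm; first exact: index_enum_uniq.
  rewrite map_inj_in_uniq ?uniq_bitseqs // => b b'.
  rewrite !mem_bitseqs => /eqP Hb /eqP Hb' E.
  apply: (@eq_from_nth _ false); first by rewrite Hb Hb'.
  move=> k; rewrite Hb => Hk.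
  by have := congr1 (fun I : {set 'I_d} => Ordinal Hk \in I) E; rewrite !inE.
move=> I; rewrite mem_index_enum; symmetry; apply/mapP.
exists [seq i \in I | i <- enum 'I_d]; first by rewrite mem_bitseqs size_map size_enum_ord.
by apply/setP => i; rewrite inE (nth_map i) ?size_enum_ord // nth_ord_enum.
Qed.

End BigBitseqs.

Section SplitSums.
Variables (R : pzSemiRingType) (T : eqType).
Local Open Scope ring_scope.

Lemma sum_take_drop_eq (A B g : seq T) :
  \sum_(i < (size g).+1) ((A == take i g) && (B == drop i g))%:R = (A ++ B == g)%:R :> R.
Proof.
case: (boolP (A ++ B == g)) => [/eqP <- | NE].
  have Hi : (size A < (size (A ++ B)).+1)%N by rewrite size_cat ltnS leq_addr.
  rewrite (bigD1 (Ordinal Hi)) //= take_size_cat // drop_size_cat // !eqxx /=.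
  rewrite big1 ?addr0 // => i /eqP Ni.
  case: (boolP (A == take i (A ++ B))) => //= /eqP EA.
  case: Ni; apply: val_inj => /=.
  have := congr1 size EA; rewrite size_take_min => ->.
  by have := ltn_ord i; rewrite ltnS => /minn_idPl ->.
rewrite big1 // => i _.
case: (boolP (A == take i g)) => //= /eqP EA.
case: (boolP (B == drop i g)) => //= /eqP EB.
by case/negP: NE; rewrite EA EB cat_take_drop.
Qed.

Lemma sum_take_drop_indicators (U1 U2 : bool) (A1 A2 B1 B2 g1 g2 : seq T) :
  \sum_(i < (size g1).+1) \sum_(j < (size g2).+1)
    ((U1 && (A1 == take i g1) && (B1 == take j g2))%:R *
     (U2 && (A2 == drop i g1) && (B2 == drop j g2))%:R) =
  (U1 && U2 && (A1 ++ A2 == g1) && (B1 ++ B2 == g2))%:R :> R.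
Proof.
have split_ind (u1 u2 a1 a2 b1 b2 : bool) :
    (u1 && a1 && b1)%:R * (u2 && a2 && b2)%:R
    = (u1 && u2)%:R * ((a1 && a2)%:R * (b1 && b2)%:R) :> R.
  rewrite -!natrM !mulnb; congr (_%:R).
  by case: u1; case: u2; case: a1; case: a2; case: b1; case: b2.
under eq_bigr => i _ do under eq_bigr => j _ do rewrite split_ind.
under eq_bigr => i _ do rewrite -mulr_sumr -mulr_sumr sum_take_drop_eq.
by rewrite -mulr_sumr -mulr_suml !sum_take_drop_eq -!natrM !mulnb andbA.
Qed.

End SplitSums.

Section Terms.
Variable S : Type.
Notation tm := (term S).

Fixpoint all_prop (Q : tm -> Prop) (ts : seq tm) : Prop :=
  if ts is u :: ts' then Q u /\ all_prop Q ts' else True.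

Lemma all_propT (Q : tm -> Prop) ts : (forall u, Q u) -> all_prop Q ts.
Proof. by move=> H; elim: ts => //= u ts ->; split. Qed.

Definition term_nested_ind (Q : tm -> Prop) (HL : Q Leaf)
  (HN : forall s ts, all_prop Q ts -> Q (Node s ts)) : forall t, Q t :=
  fix IH t := match t with
  | Leaf => HL
  | Node s ts => HN s ts ((fix F ts : all_prop Q ts :=
       match ts with [::] => I | u :: ts' => conj (IH u) (F ts') end) ts)
  end.

(* The anonymous inner loops of [anc_go] and [restr_go]: [F] receives each
   term of [ts] with the preorder index of its root. *)
Fixpoint map_pre (A : Type) (F : nat -> tm -> A) (m : nat) (ts : seq tm) : seq A :=
  if ts is u :: ts' then F m u :: map_pre F (m + deg u) ts' else [::].

Lemma size_map_pre A (F : nat -> tm -> A) m ts : size (map_pre F m ts) = size ts.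
Proof. by elim: ts m => //= u ts IH m; rewrite IH. Qed.

Lemma map_map_pre A B (G : A -> B) (F : nat -> tm -> A) m ts :
  map G (map_pre F m ts) = map_pre (fun m u => G (F m u)) m ts.
Proof. by elim: ts m => //= u ts IH m; rewrite IH. Qed.

Lemma map_pre_const A (c : A) m ts : map_pre (fun _ _ => c) m ts = nseq (size ts) c.
Proof. by elim: ts m => //= u ts IH m; rewrite IH. Qed.

Lemma map_pre_id m ts : map_pre (fun _ u => u) m ts = ts.
Proof. by elim: ts m => //= u ts IH m; rewrite IH. Qed.

Lemma eq_map_pre_if A (H : nat -> tm -> bool) (F G : nat -> tm -> A) ts m :
  all_prop (fun u => forall m, H m u -> F m u = G m u) ts ->
  all id (map_pre H m ts) -> map_pre F m ts = map_pre G m ts.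
Proof. by elim: ts m => //= u ts IH m [Hu Hts] /andP[h1 h2]; rewrite Hu // IH. Qed.

Lemma eq_map_pre A (F G : nat -> tm -> A) ts m :
  all_prop (fun u => forall m, F m u = G m u) ts -> map_pre F m ts = map_pre G m ts.
Proof. by elim: ts m => //= u ts IH m [Hu Hts]; rewrite Hu IH. Qed.

Lemma all_map_pre_true m ts : all id (map_pre (fun _ _ => true) m ts).
Proof. by rewrite map_pre_const; elim: (size ts). Qed.

Lemma flatten_nseq_nil (A : Type) k : flatten (nseq k ([::] : seq A)) = [::].
Proof. by elim: k. Qed.

Lemma rd_flatten (L : seq (seq tm)) : rd (flatten L) = flatten (map (@rd S) L).
Proof. by elim: L => //= a L <-; rewrite /rd filter_cat. Qed.

(* All functions of terms below read their index predicate only on the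
   window of preorder indices of the term. *)
Definition agree (P P' : pred nat) n n' d := forall k, k < d -> P (k + n) = P' (k + n').

Lemma agree_node P P' n n' (s : S) (ts : seq tm) : agree P P' n n' (deg (Node s ts)) ->
  P n = P' n' /\ agree P P' n.+1 n'.+1 (sumn (map (@deg S) ts)).
Proof.
move=> H; split; first by apply: (H 0).
by move=> k Hk; rewrite -!addSnnS; apply: H => /=; lia.
Qed.

Lemma agree_cons P P' n n' d : P n = P' n' -> agree P P' n.+1 n'.+1 d ->
  agree P P' n n' d.+1.
Proof. by move=> E H [|k] Hk //=; rewrite !addSnnS; apply: (H k). Qed.

Lemma agree_cat P P' m m' d1 d2 : agree P P' m m' d1 ->
  agree P P' (m + d1) (m' + d1) d2 -> agree P P' m m' (d1 + d2).
Proof.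
move=> H1 H2 k Hk; case: (ltnP k d1) => Hkd; first exact: (H1 k).
have -> : k + m = (k - d1) + (m + d1) by lia.
have -> : k + m' = (k - d1) + (m' + d1) by lia.
by apply: (H2 (k - d1)); lia.
Qed.

Lemma agree_catl P P' m m' d1 d2 : agree P P' m m' (d1 + d2) -> agree P P' m m' d1.
Proof. by move=> H k Hk; apply: (H k); lia. Qed.

Lemma agree_catr P P' m m' d1 d2 : agree P P' m m' (d1 + d2) ->
  agree P P' (m + d1) (m' + d1) d2.
Proof. by move=> H k Hk; rewrite [m + d1]addnC [m' + d1]addnC !addnA; apply: H; lia. Qed.

Lemma agree_false P P' m m' d : (forall k, k < d -> P (k + m) = false) ->
  (forall k, k < d -> P' (k + m') = false) -> agree P P' m m' d.
Proof. by move=> H1 H2 k Hk; rewrite H1 // H2. Qed.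

Lemma agree_neg P P' m m' d : agree P P' m m' d ->
  agree (fun k => ~~ P k) (fun k => ~~ P' k) m m' d.
Proof. by move=> H k Hk; rewrite H. Qed.

Lemma map_pre_agree A (P P' : pred nat) (F G : nat -> tm -> A) ts :
  all_prop (fun u => forall m m', agree P P' m m' (deg u) -> F m u = G m' u) ts ->
  forall m m', agree P P' m m' (sumn (map (@deg S) ts)) ->
  map_pre F m ts = map_pre G m' ts.
Proof.
elim: ts => //= u ts IH [Hu Hts] m m' HP.
by rewrite (Hu m m') ?(IH Hts (m + deg u) (m' + deg u)) //;
  [apply: agree_catr HP | apply: agree_catl HP].
Qed.


(** * Cutting a term along an ancestor-closed set of nodes *)

Lemma restr_goE P n s (ts : seq tm) :
  restr_go P n (Node s ts) =
  let rs := map_pre (restr_go P) n.+1 ts in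
  if P n then (Node s (map fst rs), flatten (map snd rs))
  else (Leaf, flatten [seq rd [:: r.1] ++ r.2 | r <- rs]).
Proof.
rewrite /=; suff -> : (fix gos (m : nat) (ts : seq tm) {struct ts} : seq (tm * forest S) :=
  match ts with [::] => [::] | u :: ts' => restr_go P m u :: gos (m + deg u) ts' end)
  n.+1 ts = map_pre (restr_go P) n.+1 ts by [].
by elim: ts n.+1 => //= u ts IH m; rewrite IH.
Qed.

Fixpoint avoid (P : pred nat) (n : nat) (t : tm) : bool :=
  match t with
  | Leaf => true
  | Node s ts => ~~ P n && (let fix g m ts := match ts with [::] => true
       | u :: ts' => avoid P m u && g (m + deg u) ts' end in g n.+1 ts)
  end.

Lemma avoidE P n (s : S) (ts : seq tm) :
  avoid P n (Node s ts) = ~~ P n && all id (map_pre (avoid P) n.+1 ts).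
Proof. by rewrite /=; congr andb; elim: ts n.+1 => //= u ts IH m; rewrite IH. Qed.

Fixpoint anc_closed (P : pred nat) (n : nat) (t : tm) : bool :=
  match t with
  | Leaf => true
  | Node s ts => let fix g m ts := match ts with [::] => true
       | u :: ts' => (if P n then anc_closed P m u else avoid P m u) && g (m + deg u) ts'
       end in g n.+1 ts
  end.

Lemma anc_closedE P n (s : S) (ts : seq tm) :
  anc_closed P n (Node s ts) = if P n then all id (map_pre (anc_closed P) n.+1 ts)
                               else all id (map_pre (avoid P) n.+1 ts).
Proof. by rewrite /=; case: (P n); elim: ts n.+1 => //= u ts IH m; rewrite IH. Qed.

(* [cut P n t = (t', us)] with [t = t'[us]], where [t'] consists of the
   nodes in [P]; leaves of [t'] come from leaves of [t] (then the
   corresponding member of [us] is [Leaf]) or from maximal subterms avoiding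
   [P]. *)
Fixpoint cut (P : pred nat) (n : nat) (t : tm) : tm * seq tm :=
  match t with
  | Leaf => (Leaf, [:: Leaf])
  | Node s ts => if P n then
      let cs := (let fix g m ts := match ts with [::] => [::]
             | u :: ts' => cut P m u :: g (m + deg u) ts' end in g n.+1 ts) in
      (Node s (map fst cs), flatten (map snd cs))
     else (Leaf, [:: Node s ts])
  end.

Lemma cutE P n (s : S) (ts : seq tm) :
  cut P n (Node s ts) = if P n then
     (Node s (map fst (map_pre (cut P) n.+1 ts)), flatten (map snd (map_pre (cut P) n.+1 ts)))
     else (Leaf, [:: Node s ts]).
Proof.
rewrite /=; case: (P n) => //.
suff -> : (fix g (m : nat) (ts : seq tm) {struct ts} : seq (tm * seq tm) :=
  match ts with [::] => [::] | u :: ts' => cut P m u :: g (m + deg u) ts' end)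
  n.+1 ts = map_pre (cut P) n.+1 ts by [].
by elim: ts n.+1 => //= u ts IH m; rewrite IH.
Qed.

Lemma restr_go_agree (t : tm) P P' n n' : agree P P' n n' (deg t) ->
  restr_go P n t = restr_go P' n' t.
Proof.
elim/term_nested_ind: t n n' => // s ts IH n n' /agree_node [E H].
by rewrite !restr_goE /= E (map_pre_agree IH H).
Qed.

Lemma avoid_agree (t : tm) P P' n n' : agree P P' n n' (deg t) ->
  avoid P n t = avoid P' n' t.
Proof.
elim/term_nested_ind: t n n' => // s ts IH n n' /agree_node [E H].
by rewrite !avoidE /= E (map_pre_agree IH H).
Qed.

Lemma anc_closed_agree (t : tm) P P' n n' : agree P P' n n' (deg t) ->
  anc_closed P n t = anc_closed P' n' t.
Proof.
elim/term_nested_ind: t n n' => // s ts IH n n' /agree_node [E H].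
rewrite !anc_closedE /= E (map_pre_agree IH H) //.
by rewrite (map_pre_agree (all_propT _ (fun u m m' => @avoid_agree u P P' m m')) H).
Qed.

Lemma cut_agree (t : tm) P P' n n' : agree P P' n n' (deg t) ->
  cut P n t = cut P' n' t.
Proof.
elim/term_nested_ind: t n n' => // s ts IH n n' /agree_node [E H].
by rewrite !cutE /= E (map_pre_agree IH H).
Qed.

Lemma avoid_false (t : tm) P n : avoid P n t -> forall k, k < deg t -> P (k + n) = false.
Proof.
elim/term_nested_ind: t n => // s ts IH n; rewrite avoidE => /andP[Pn H] [|k] /=.
  by move/negPf: Pn.
rewrite addSnnS ltnS.
elim: ts IH (n.+1) k H => //= u ts IHl [Hu Hts] m k /andP[h1 h2] Hk.
case: (ltnP k (deg u)) => Hku; first exact: Hu.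
have -> : k + m = (k - deg u) + (m + deg u) by lia.
by apply: IHl => //; lia.
Qed.

Lemma avoid_pred0 (t : tm) n : avoid pred0 n t.
Proof.
elim/term_nested_ind: t n => // s ts IH n; rewrite avoidE /=.
by rewrite (eq_map_pre (G := fun _ _ => true)) ?all_map_pre_true.
Qed.

Lemma restr_go_avoid (t : tm) P n : avoid P n t -> restr_go P n t = (Leaf, [::]).
Proof.
elim/term_nested_ind: t n => // s ts IH n; rewrite avoidE restr_goE /= => /andP[Pn H].
rewrite (negPf Pn) (eq_map_pre_if (G := fun _ _ => (Leaf, [::])) IH H).
by rewrite map_pre_const map_nseq /= flatten_nseq_nil.
Qed.

Lemma restr_go_compl_avoid (t : tm) P n :
  avoid P n t -> restr_go (fun k => ~~ P k) n t = (t, [::]).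
Proof.
elim/term_nested_ind: t n => // s ts IH n; rewrite avoidE restr_goE /= => /andP[Pn H].
rewrite Pn (eq_map_pre_if (G := fun _ u => (u, [::])) IH H).
by rewrite !map_map_pre /= map_pre_id map_pre_const flatten_nseq_nil.
Qed.

Lemma restr_go_cut (t : tm) P n :
  anc_closed P n t -> restr_go P n t = ((cut P n t).1, [::]).
Proof.
elim/term_nested_ind: t n => // s ts IH n; rewrite anc_closedE restr_goE cutE /=.
case Pn: (P n) => H.
  rewrite (eq_map_pre_if (G := fun m u => ((cut P m u).1, [::])) IH H).
  by rewrite !map_map_pre /= map_pre_const flatten_nseq_nil.
have HN := all_propT ts (fun u m => @restr_go_avoid u P m).
rewrite (eq_map_pre_if (G := fun _ _ => (Leaf, [::])) HN H).
by rewrite map_pre_const map_nseq /= flatten_nseq_nil.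
Qed.

Lemma rd_cut_restr_compl (t : tm) P n : anc_closed P n t ->
  rd (cut P n t).2 = rd [:: (restr_go (fun k => ~~ P k) n t).1] ++
                        (restr_go (fun k => ~~ P k) n t).2.
Proof.
elim/term_nested_ind: t n => // s ts IH n H.
case Pn: (P n); last first.
  have HN : avoid P n (Node s ts) by rewrite avoidE Pn; move: H; rewrite anc_closedE Pn.
  by rewrite (restr_go_compl_avoid HN) cutE Pn /= ?cats0.
move: H; rewrite anc_closedE cutE restr_goE /= Pn /= => H.
rewrite rd_flatten -map_comp map_map_pre.
by rewrite (eq_map_pre_if IH H) map_map_pre.
Qed.

Lemma cut_inj (t : tm) P P' n n' : anc_closed P n t -> anc_closed P' n' t ->
  (cut P n t).1 = (cut P' n' t).1 -> agree P P' n n' (deg t).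
Proof.
elim/term_nested_ind: t n n' => [n n' _ _ _ k|s ts IH n n']; first by rewrite /= ltn0.
rewrite !anc_closedE !cutE.
case Pn: (P n); case Pn': (P' n') => // H H' /= E;
  apply: agree_cons; rewrite ?Pn ?Pn' //.
- case: E => E; elim: ts IH (n.+1) (n'.+1) H H' E {Pn Pn'} => //= u ts IHl [Hu Hts] m m'
     /andP[h1 h2] /andP[h1' h2'] [E1 E2].
  by apply: agree_cat; [exact: Hu | exact: IHl].
- elim: ts IH (n.+1) (n'.+1) H H' {E Pn Pn'} => //= u ts IHl [Hu Hts] m m'
     /andP[h1 h2] /andP[h1' h2'].
  by apply: agree_cat; [apply: agree_false; apply: avoid_false | exact: IHl].
Qed.


(** * Decompositions of a term are its cuts *)

Fixpoint graft_seq (ts us : seq tm) : seq tm * seq tm :=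
  if ts is t1 :: ts' then
    let r1 := graft_go t1 us in let r2 := graft_seq ts' r1.2 in (r1.1 :: r2.1, r2.2)
  else ([::], us).

Lemma graft_goE (s : S) ts us :
  graft_go (Node s ts) us = (Node s (graft_seq ts us).1, (graft_seq ts us).2).
Proof. by []. Qed.

Lemma graft_seq_cat_ind (ts : seq tm) :
  all_prop (fun t => forall us rest, size us = nleaves t ->
             graft_go t (us ++ rest) = ((graft_go t us).1, rest)) ts ->
  forall us rest, size us = sumn (map (@nleaves S) ts) ->
  graft_seq ts (us ++ rest) = ((graft_seq ts us).1, rest).
Proof.
elim: ts => [_ [|? ?] //|u ts IH [Hu Hts]] us rest /= Hs.
rewrite -(cat_take_drop (nleaves u) us) -catA.
rewrite Hu ?size_take_min; last by lia.
rewrite (Hu _ (drop (nleaves u) us)) ?size_take_min; last by lia.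
by rewrite /= IH // size_drop; lia.
Qed.

Lemma graft_go_cat (t : tm) us rest : size us = nleaves t ->
  graft_go t (us ++ rest) = ((graft_go t us).1, rest).
Proof.
elim/term_nested_ind: t us rest => [|s ts IH] us rest; first by case: us => [|u [|? ?]].
by move=> Hs; rewrite !graft_goE /= graft_seq_cat_ind.
Qed.

Lemma graft_seq_flatten (cs : seq (tm * seq tm)) :
  all (fun c => size c.2 == nleaves c.1) cs ->
  graft_seq (map fst cs) (flatten (map snd cs)) = (map (fun c => graft c.1 c.2) cs, [::]).
Proof.
elim: cs => //= c cs IH /andP[/eqP Hc Hcs].
by rewrite graft_go_cat //= IH.
Qed.

Lemma graft_node (s : S) ts us : size us = sumn (map (@nleaves S) ts) ->
  graft (Node s ts) us =
  Node s [seq graft c.1 c.2 | c <- zip ts (reshape (map (@nleaves S) ts) us)].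
Proof.
move=> Hs; set segs := reshape _ us.
have Hsz : shape segs = map (@nleaves S) ts by rewrite /segs reshapeKl ?Hs.
have Hsz' : size segs = size ts by rewrite size_reshape size_map.
have Hall : all (fun c => size c.2 == nleaves c.1) (zip ts segs).
  by elim: ts segs Hsz {Hs Hsz'} => [|u ts IH] [|sg sgs] //= [-> /IH ->]; rewrite eqxx.
have := graft_seq_flatten Hall.
rewrite -/(unzip1 _) -/(unzip2 _) unzip1_zip ?unzip2_zip ?Hsz' // reshapeKr ?Hs //.
by rewrite /graft graft_goE => ->.
Qed.

Lemma cut_decomp (ar : S -> nat) (t : tm) P n : wf ar t ->
  let c := cut P n t in
  [/\ wf ar c.1, all (wf ar) c.2, size c.2 = nleaves c.1 & graft c.1 c.2 = t].
Proof.
elim/term_nested_ind: t n => [|s ts IH] n; first by move=> _ /=.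
rewrite cutE /=; case: (P n) => /andP[/eqP Hs Hw] /=; last by rewrite Hs eqxx Hw.
set cs := map_pre (cut P) n.+1 ts.
have [w1 w2 sz gr] : [/\ all (wf ar) (map fst cs), all (wf ar) (flatten (map snd cs)),
    all (fun c => size c.2 == nleaves c.1) cs & map (fun c => graft c.1 c.2) cs = ts].
  rewrite {}/cs; elim: ts IH n.+1 Hw {Hs} => //= u ts IHl [Hu Hts] m /andP[wu wts].
  have [h1 h2 h3 h4] := Hu m wu; have [k1 k2 k3 k4] := IHl Hts (m + deg u) wts.
  by rewrite h1 all_cat h2 k1 k2 k3 h3 eqxx h4 k4.
split => //.
- by rewrite size_map (size_map_pre (cut P) n.+1 ts) Hs eqxx w1.
- rewrite size_flatten /shape -map_comp; congr sumn.
  by elim: {w1 w2 gr}cs sz => //= c cs IHc /andP[/eqP -> /IHc ->].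
- by rewrite /graft graft_goE /= graft_seq_flatten // gr.
Qed.

Definition catp d (P1 P2 : pred nat) : pred nat :=
  fun k => if k < d then P1 k else P2 (k - d).

Lemma agree_catpl d P1 P2 : agree (catp d P1 P2) P1 0 0 d.
Proof. by move=> k Hk; rewrite /catp addn0 Hk. Qed.

Lemma agree_catpr d P1 P2 e : agree (catp d P1 P2) P2 (0 + d) 0 e.
Proof. by move=> k _; rewrite /catp add0n addn0 ifF ?addnK //; lia. Qed.

Lemma cut_leaf_exists (u : tm) : exists P, anc_closed P 0 u /\ cut P 0 u = (Leaf, [:: u]).
Proof.
exists pred0; case: u => [|s ts] //; rewrite anc_closedE cutE /=; split => //.
rewrite (eq_map_pre (G := fun _ _ => true)) ?all_map_pre_true //.
exact: all_propT (fun u m => avoid_pred0 u m).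
Qed.

Lemma cut_children_exists (ts : seq tm) segs :
  all_prop (fun t' => forall us, size us = nleaves t' ->
    exists P, anc_closed P 0 (graft t' us) /\ cut P 0 (graft t' us) = (t', us)) ts ->
  map size segs = map (@nleaves S) ts ->
  let gs := [seq graft c.1 c.2 | c <- zip ts segs] in
  exists P, all id (map_pre (anc_closed P) 0 gs) /\ map_pre (cut P) 0 gs = zip ts segs.
Proof.
elim: ts segs => [|u ts IH] [|sg sgs] //=; first by exists pred0.
move=> [Hu Hts] [Hsg Hsgs].
have [Pu [Hu1 Hu2]] := Hu sg Hsg; have [Pr [Hr1 Hr2]] := IH sgs Hts Hsgs.
set d := deg (graft u sg); exists (catp d Pu Pr).
rewrite (anc_closed_agree (@agree_catpl d Pu Pr)) (cut_agree (@agree_catpl d Pu Pr)) Hu1 Hu2.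
rewrite (map_pre_agree (all_propT _ (fun u m m' => @anc_closed_agree u _ _ m m'))
  (@agree_catpr d Pu Pr _)) Hr1.
by rewrite (map_pre_agree (all_propT _ (fun u m m' => @cut_agree u _ _ m m'))
  (@agree_catpr d Pu Pr _)) Hr2.
Qed.

Lemma cut_exists (t' : tm) us : size us = nleaves t' ->
  exists P, anc_closed P 0 (graft t' us) /\ cut P 0 (graft t' us) = (t', us).
Proof.
elim/term_nested_ind: t' us => [|s ts IH] us.
  by case: us => [|u [|? ?]] // _; exact: cut_leaf_exists.
move=> Hs; rewrite graft_node //; set segs := reshape _ us.
have Hsz : shape segs = map (@nleaves S) ts by rewrite /segs reshapeKl ?Hs.
have Hsz' : size segs = size ts by rewrite size_reshape size_map.
have [Pc [H1 H2]] := cut_children_exists IH Hsz.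
exists (fun k => if k is k'.+1 then Pc k' else true).
have Ag : agree (fun k => if k is k'.+1 then Pc k' else true) Pc 1 0
  (sumn (map (@deg S) [seq graft c.1 c.2 | c <- zip ts segs])).
  by move=> k Hk; rewrite addn1 addn0.
rewrite anc_closedE cutE /=.
rewrite (map_pre_agree (all_propT _ (fun u m m' => @anc_closed_agree u _ _ m m')) Ag) H1.
rewrite (map_pre_agree (all_propT _ (fun u m m' => @cut_agree u _ _ m m')) Ag) H2.
by rewrite -/(unzip1 _) -/(unzip2 _) unzip1_zip ?unzip2_zip ?Hsz' // reshapeKr ?Hs.
Qed.

(** * Ancestor lists and admissible pairs *)

Lemma anc_goE A n (s : S) (ts : seq tm) :
  anc_go A n (Node s ts) = A :: flatten (map_pre (anc_go (n :: A)) n.+1 ts).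
Proof. by rewrite /=; congr cons; elim: ts n.+1 => //= u ts IH m; rewrite IH. Qed.

Lemma size_anc_go (t : tm) A n : size (anc_go A n t) = deg t.
Proof.
elim/term_nested_ind: t A n => // s ts IH A n; rewrite anc_goE /= size_flatten.
congr _.+1; elim: ts IH n.+1 => //= u ts IHl [Hu Hts] m.
by rewrite /shape /= Hu -/(shape _) (IHl Hts).
Qed.

Lemma size_ancs_from (f : forest S) m : size (ancs_from m f) = degf f.
Proof. by elim: f m => //= t f IH m; rewrite size_cat size_anc_go IH. Qed.

(* [L] lists the proper ancestors of the nodes [n], [n + 1], ... *)
Definition ancs_closed (P : pred nat) n (L : seq (seq nat)) :=
  all (fun p => P p.1 ==> all P p.2) (zip (iota n (size L)) L).

Lemma ancs_closed_cons P n a L :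
  ancs_closed P n (a :: L) = (P n ==> all P a) && ancs_closed P n.+1 L.
Proof. by []. Qed.

Lemma ancs_closed_cat P n L1 L2 :
  ancs_closed P n (L1 ++ L2) = ancs_closed P n L1 && ancs_closed P (n + size L1) L2.
Proof.
elim: L1 n => [|a L1 IH] n; first by rewrite addn0.
by rewrite cat_cons !ancs_closed_cons IH /= addSnnS andbA.
Qed.

Lemma ancs_closedP (P : pred nat) n (L : seq (seq nat)) :
  reflect (forall j, j < size L -> P (n + j) -> all P (nth [::] L j)) (ancs_closed P n L).
Proof.
apply: (iffP idP).
  elim: L n => [|a L IH] n //; rewrite ancs_closed_cons => /andP[H1 /IH H2] [|j] /= Hj.
    by rewrite addn0 => /(implyP H1).
  by rewrite -addSnnS; apply: H2.
elim: L n => [|a L IH] n // H; rewrite ancs_closed_cons; apply/andP; split.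
  by apply/implyP => Pn; have := H 0 isT; rewrite addn0; apply.
by apply/IH => j Hj; rewrite addSnnS; apply: (H j.+1).
Qed.

Lemma ancs_closed_anc_go (t : tm) P A n :
  ancs_closed P n (anc_go A n t) = if all P A then anc_closed P n t else avoid P n t.
Proof.
elim/term_nested_ind: t A n => [|s ts IH] A n; first by case: (all P A).
rewrite anc_goE ancs_closed_cons.
have -> : ancs_closed P n.+1 (flatten (map_pre (anc_go (n :: A)) n.+1 ts)) =
    all id (map_pre (fun m u => ancs_closed P m (anc_go (n :: A) m u)) n.+1 ts).
  by elim: ts {IH} n.+1 => //= u ts IHl m; rewrite ancs_closed_cat size_anc_go IHl.
rewrite (eq_map_pre (G := fun m u => if all P (n :: A) then anc_closed P m u
                                     else avoid P m u)); last first.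
  by elim: ts IH => //= u ts IHl [Hu Hts]; split; [move=> m; apply: Hu | apply: IHl].
by rewrite anc_closedE avoidE /=; case: (P n); case: (all P A).
Qed.

Fixpoint anc_closedF (P : pred nat) (m : nat) (f : forest S) : bool :=
  if f is t :: f' then anc_closed P m t && anc_closedF P (m + deg t) f' else true.

Lemma ancs_closed_ancs_from P (f : forest S) m :
  ancs_closed P m (ancs_from m f) = anc_closedF P m f.
Proof. by elim: f m => //= t f IH m; rewrite ancs_closed_cat ancs_closed_anc_go size_anc_go IH. Qed.

Lemma all_flatten (T : Type) (p : pred T) (L : seq (seq T)) :
  all p (flatten L) = all (all p) L.
Proof. by elim: L => //= a L IH; rewrite all_cat IH. Qed.

Lemma anc_go_bound (t : tm) A n b : all (fun x => x < b) A -> n + deg t <= b ->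
  all (all (fun x => x < b)) (anc_go A n t).
Proof.
elim/term_nested_ind: t A n => [|s ts IH] A n HA Hb //.
rewrite anc_goE /= HA /= all_flatten.
have Hn : n < b by move: Hb => /=; lia.
have : n.+1 + sumn (map (@deg S) ts) <= b by move: Hb => /=; lia.
elim: ts IH n.+1 {Hb} => //= u ts IHl [Hu Hts] m Hm.
by rewrite Hu /= ?Hn ?HA //; [apply: IHl => //|]; lia.
Qed.

Lemma ancs_from_bound (f : forest S) m b : m + degf f <= b ->
  all (all (fun x => x < b)) (ancs_from m f).
Proof.
elim: f m => //= t f IH m Hb; rewrite all_cat anc_go_bound //=; last first.
  by move: Hb; rewrite /degf /=; lia.
by apply: IH; move: Hb; rewrite /degf /=; lia.
Qed.

Lemma restr_from_agree (f : forest S) P P' m m' : agree P P' m m' (degf f) ->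
  restr_from P m f = restr_from P' m' f.
Proof.
elim: f m m' => //= t f IH m m' H.
rewrite (@restr_go_agree t P P' m m') ?(IH (m + deg t) (m' + deg t)) //.
  exact: agree_catr H.
exact: agree_catl H.
Qed.

Lemma anc_closedF_agree (f : forest S) P P' m m' : agree P P' m m' (degf f) ->
  anc_closedF P m f = anc_closedF P' m' f.
Proof.
elim: f m m' => //= t f IH m m' H.
rewrite (@anc_closed_agree t P P' m m') ?(IH (m + deg t) (m' + deg t)) //.
  exact: agree_catr H.
exact: agree_catl H.
Qed.

Definition anc_closed_set (f : forest S) (I : {set 'I_(degf f)}) :=
  [forall i : 'I_(degf f), forall j : 'I_(degf f),
      ((j \in I) && is_anc f i j) ==> (i \in I)].

Lemma admissibleE (f : forest S) (I1 I2 : {set 'I_(degf f)}) :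
  admissible I1 I2 = (I2 == ~: I1) && anc_closed_set I1.
Proof.
rewrite /admissible /anc_closed_set.
case: (boolP (I2 == ~: I1)) => [/eqP -> | NE] /=.
  rewrite finset.disjoints_subset finset.setCK subxx /=.
  have -> : [forall k, (k \in I1) || (k \in ~: I1)] by apply/forallP => k; rewrite inE orbN.
  rewrite /=; case: (boolP [forall i, forall j, _]) => //= H.
  apply/forallP => i; apply/forallP => j; apply/implyP; rewrite !inE => /andP[Hi Ha].
  apply/negP => Hj; move/forallP: H => /(_ i) /forallP /(_ j).
  by rewrite Hj Ha /= (negPf Hi).
apply/negP => /and4P[D C _ _]; case/negP: NE; apply/eqP/setP => k.
rewrite !inE; move/forallP: C => /(_ k).
case: (boolP (k \in I1)) => //= Hk _.
by move: D; rewrite finset.disjoints_subset => /fintype.subsetP /(_ k);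
  rewrite !inE Hk => /(_ isT) /negPf.
Qed.

Lemma anc_closed_set_bits (f : forest S) b : size b = degf f ->
  anc_closed_set (set_of_bits (degf f) b) = anc_closedF (nth false b) 0 f.
Proof.
move=> Hs; rewrite -ancs_closed_ancs_from /anc_closed_set.
have Hb := @ancs_from_bound f 0 (0 + degf f) (leqnn _).
have HL := size_ancs_from f 0.
apply/idP/ancs_closedP => [H j Hj Pj | H].
  apply/allP => x Hx.
  have Hxd : x < degf f.
    by move/allP: Hb => /(_ _ (mem_nth [::] Hj)) /allP /(_ x Hx); rewrite add0n.
  have Hjd : j < degf f by rewrite -HL.
  move/forallP: H => /(_ (Ordinal Hxd)) /forallP /(_ (Ordinal Hjd)).
  by rewrite !inE /= Pj /is_anc Hx /=.
apply/forallP => i; apply/forallP => j; apply/implyP; rewrite !inE => /andP[Hj Ha].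
by have := H j; rewrite HL ltn_ord add0n => /(_ isT Hj) /allP; apply.
Qed.

End Terms.

Lemma in_set_nat_bits d b k : size b = d -> in_set_nat (set_of_bits d b) k = nth false b k.
Proof.
move=> Hs; rewrite /in_set_nat; case: insubP => [i Hk <- | Hk]; first by rewrite inE.
by rewrite nth_default // Hs leqNgt.
Qed.

Lemma in_set_nat_bitsC d b k : size b = d ->
  in_set_nat (~: set_of_bits d b) k = (k < d) && ~~ nth false b k.
Proof.
move=> Hs; rewrite /in_set_nat; case: insubP => [i Hk <- | Hk]; first by rewrite !inE ltn_ord.
by rewrite (negPf Hk).
Qed.

(** * The coproduct *)

Section Coproduct.
Variables (K : fieldType) (S : Type) (ar : S -> nat).
Notation tm := (term S).
Local Open Scope ring_scope.
Local Open Scope classical_set_scope.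

(* The decompositions of [t] are exactly the cuts along ancestor-closed
   sets of nodes, each obtained from exactly one such set. *)
Lemma DeltaT_bitseqs (t : tm) h1 h2 : wf ar t ->
  DeltaT K ar t h1 h2 = \sum_(b <- bitseqs (deg t)) (anc_closed (nth false b) 0 t &&
     (rd [:: (restr_go (nth false b) 0 t).1] ++ (restr_go (nth false b) 0 t).2 == h1) &&
     (rd [:: (restr_go (fun k => ~~ nth false b k) 0 t).1] ++
         (restr_go (fun k => ~~ nth false b k) 0 t).2 == h2))%:R.
Proof.
move=> wt.
set cuts := [seq cut (nth false b) 0 t | b <- [seq b <- bitseqs (deg t) |
                                                  anc_closed (nth false b) 0 t]].
have decompE : decomp ar t = [set` cuts].
  apply/seteqP; split => -[t' us] /=.
    rewrite /decomp /= => -[w1 w2 Hsz Hg].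
    have [P [HU HC]] := cut_exists Hsz; rewrite Hg in HU HC.
    set b := mkseq P (deg t).
    have Ag : agree (nth false b) P 0 0 (deg t) by move=> k Hk; rewrite !addn0 nth_mkseq.
    apply/mapP; exists b; last by rewrite (cut_agree Ag) HC.
    by rewrite mem_filter mem_bitseqs size_mkseq eqxx (anc_closed_agree Ag) HU.
  move=> /mapP [b]; rewrite mem_filter => /andP[HU Hb] E.
  by have := cut_decomp (nth false b) 0 wt; rewrite -E => -[? ? ? ?]; split.
have uniq_cuts : uniq cuts.
  rewrite map_inj_in_uniq ?filter_uniq ?uniq_bitseqs // => b b'.
  rewrite !mem_filter !mem_bitseqs => /andP[U /eqP Sb] /andP[U' /eqP Sb'] E.
  have Ag := cut_inj U U' (congr1 fst E).
  apply: (@eq_from_nth _ false); first by rewrite Sb Sb'.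
  by move=> k; rewrite Sb => Hk; have := Ag k Hk; rewrite !addn0.
rewrite /DeltaT decompE -(fsbig_seq _ _ uniq_cuts) big_map big_filter big_mkcond.
apply: eq_bigr => b _; case: (boolP (anc_closed (nth false b) 0 t)) => HU //=.
by rewrite (restr_go_cut HU) -(rd_cut_restr_compl HU) /= cats0.
Qed.

Lemma exchange_big2 (I J A B : Type) (rI : seq I) (rJ : seq J) (rA : seq A) (rB : seq B)
  (F : I -> J -> A -> B -> K) :
  \sum_(i <- rI) \sum_(j <- rJ) \sum_(a <- rA) \sum_(b <- rB) F i j a b =
  \sum_(a <- rA) \sum_(b <- rB) \sum_(i <- rI) \sum_(j <- rJ) F i j a b.
Proof.
under eq_bigr => i _ do rewrite exchange_big.
rewrite exchange_big; apply: eq_bigr => a _.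
by under eq_bigr => i _ do rewrite exchange_big; rewrite exchange_big.
Qed.

Lemma Delta_cons (t : tm) f : Delta K ar (t :: f) = tmul (DeltaT K ar t) (Delta K ar f).
Proof. by []. Qed.

(* A bit sequence for a forest [t :: f] is the concatenation of one for
   [t] and one for [f], which matches the product in the tensor square. *)
Lemma Delta_bitseqs (f : forest S) : reduced ar f -> forall g1 g2,
  Delta K ar f g1 g2 = \sum_(b <- bitseqs (degf f)) (anc_closedF (nth false b) 0 f &&
     (restr_from (nth false b) 0 f == g1) &&
     (restr_from (fun k => ~~ nth false b k) 0 f == g2))%:R.
Proof.
elim: f => [|t f IH].
  by move=> _ g1 g2; rewrite /= big_cons big_nil addr0 /Delta /= /tunit; case: g1; case: g2.
move=> /andP[/andP[_ wt] rf] g1 g2; rewrite Delta_cons /tmul.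
under eq_bigr => i _ do under eq_bigr => j _ do
  rewrite (DeltaT_bitseqs _ _ wt) (IH rf) big_distrlr.
rewrite exchange_big2 (_ : degf (t :: f) = deg t + degf f) // big_bitseqs_cat.
rewrite big_seq [RHS]big_seq; apply: eq_bigr => b1; rewrite mem_bitseqs => /eqP Hb1.
rewrite big_seq [RHS]big_seq; apply: eq_bigr => b2; rewrite mem_bitseqs => /eqP Hb2.
rewrite sum_take_drop_indicators.
have Ag1 : agree (nth false (b1 ++ b2)) (nth false b1) 0 0 (deg t).
  by move=> k Hk; rewrite !addn0 nth_cat Hb1 Hk.
have Ag2 : agree (nth false (b1 ++ b2)) (nth false b2) (0 + deg t) 0 (degf f).
  by move=> k Hk; rewrite add0n addn0 nth_cat Hb1 ltnNge leq_addl /= addnK.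
rewrite /= (anc_closed_agree Ag1) (anc_closedF_agree Ag2).
rewrite (restr_go_agree Ag1) (restr_from_agree Ag2).
rewrite (restr_go_agree (agree_neg Ag1)) (restr_from_agree (agree_neg Ag2)).
by rewrite !catA.
Qed.

End Coproduct.

Local Open Scope ring_scope.

(* The hypothesis [charK0] is not needed: all coefficients are counts of
   decompositions, and each decomposition is counted once. *)
Theorem proposition3p3 (K : fieldType) (charK0 : [pchar K] =i pred0)
    (S : Type) (ar : S -> nat) (f : forest S) (redf : reduced ar f)
    (g1 g2 : forest S) :
  Delta K ar f g1 g2 =
  \sum_(I1 : {set 'I_(degf f)}) \sum_(I2 : {set 'I_(degf f)})
     [&& admissible I1 I2, restr I1 == g1 & restr I2 == g2]%:R.
Proof.
symmetry.
under eq_bigr => I1 _ do under eq_bigr => I2 _ do rewrite admissibleE.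
have sum_eq_indicator (T : finType) (x : T) (u v : bool) (w : T -> bool) :
    \sum_(y : T) (((y == x) && u) && (v && w y))%:R = (u && (v && w x))%:R :> K.
  by rewrite (bigD1 x) //= eqxx big1 ?addr0 // => y /negPf ->.
under eq_bigr => I1 _ do rewrite sum_eq_indicator.
rewrite (Delta_bitseqs _ redf) big_setE big_seq [RHS]big_seq.
apply: eq_bigr => b; rewrite mem_bitseqs => /eqP Hb.
have Ag1 : agree (in_set_nat (set_of_bits (degf f) b)) (nth false b) 0 0 (degf f).
  by move=> k Hk; rewrite in_set_nat_bits.
have Ag2 : agree (in_set_nat (~: set_of_bits (degf f) b)) (fun k => ~~ nth false b k)
                 0 0 (degf f).
  by move=> k Hk; rewrite in_set_nat_bitsC // addn0 Hk.
by rewrite anc_closed_set_bits // /restr (restr_from_agree Ag1) (restr_from_agree Ag2) !andbA.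
Qed.
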